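(* Let $A_{-1},A_0,A_1$ be nonnegative square matrices of finite dimension such that the block tridiagonal matrix $Q$ (with $A_0$ on the diagonal, $A_1$ on the superdiagonal, $A_{-1}$ on the subdiagonal, on the half-line) is irreducible and $\inf_{\theta\in\mathbb{R}}\mathrm{spr}(A_*(e^\theta))\le1$, where $A_*(z)=z^{-1}A_{-1}+A_0+zA_1$. Let $\underline\theta\le\bar\theta$ be the two real solutions of $\mathrm{spr}(A_*(e^\theta))=1$. Let $G$ be the minimal nonnegative solution of $G=A_{-1}+A_0G+A_1G^2$ and $G^r$ the minimal nonnegative solution of $G^r=A_1+A_0G^r+A_{-1}(G^r)^2$. Let $\boldsymbol{v}$ be a (nonnegative) right eigenvector of $G$ for the eigenvalue $e^{\underline\theta}$ and $\boldsymbol{v}^r$ a (nonnegative) right eigenvector of $G^r$ for the eigenvalue $e^{-\bar\theta}$. If $\underline\theta=\bar\theta$, then $\boldsymbol{v}=\boldsymbol{v}^r$ up to multiplication by a positive constant.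
   Context: It is known in this setting that $\mathrm{spr}(G)=e^{\underline\theta}$, $\mathrm{spr}(G^r)=e^{-\bar\theta}$, and $I-A_*(z)=(I-zR)(I-H)(I-z^{-1}G)$ with $R$ the minimal nonnegative solution of $R=R^2A_{-1}+RA_0+A_1$ and $H=A_0+A_1G$; also $A_*(e^{\theta})$ is irreducible. *)

From HB Require Import structures.
From mathcomp Require Import all_boot all_order all_algebra.
From mathcomp Require Import all_classical all_reals.
From mathcomp.analysis Require Import sequences exp.
From mathcomp Require Import complex.
From Stdlib Require Import Relations.Relation_Operators.
Set Implicit Arguments. Unset Strict Implicit. Unset Printing Implicit Defensive.
Import Order.TTheory GRing.Theory Num.Theory.
Local Open Scope ring_scope.
Local Open Scope classical_set_scope.

Definition spr (R : realType) (n : nat) (A : 'M[R]_n) : R :=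
  sup [set ComplexField.Normc.normc z | z in
       [set z : R[i] | root (map_poly (real_complex R) (char_poly A)) z]].

Definition nonneg_mx (R : realType) (m n : nat) (A : 'M[R]_(m, n)) : Prop :=
  forall i j, 0 <= A i j.
Definition le_mx (R : realType) (m n : nat) (A B : 'M[R]_(m, n)) : Prop :=
  forall i j, A i j <= B i j.

Definition Astar (R : realType) (n : nat) (Am1 A0 A1 : 'M[R]_n) (z : R)
  : 'M[R]_n := z^-1 *: Am1 + A0 + z *: A1.

(* The half-line block tridiagonal (infinite) matrix Q, indexed by
   (level, phase) in nat * 'I_n: A_0 on the diagonal, A_1 on the
   superdiagonal, A_{-1} on the subdiagonal. *)
Definition Qentry (R : realType) (n : nat) (Am1 A0 A1 : 'M[R]_n)
  (x y : nat * 'I_n) : R :=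
  if y.1 == x.1 then A0 x.2 y.2
  else if y.1 == x.1.+1 then A1 x.2 y.2
  else if y.1.+1 == x.1 then Am1 x.2 y.2
  else 0.

Definition irreducible_Q (R : realType) (n : nat) (Am1 A0 A1 : 'M[R]_n) : Prop :=
  forall x y : nat * 'I_n,
    clos_trans _ (fun u v => 0 < Qentry Am1 A0 A1 u v) x y.

Definition minimal_nonneg_sol (R : realType) (n : nat) (B0 B1 B2 G : 'M[R]_n)
  : Prop :=
  nonneg_mx G /\ G = B0 + B1 *m G + B2 *m (G *m G) /\
  (forall X : 'M[R]_n, nonneg_mx X -> X = B0 + B1 *m X + B2 *m (X *m X) ->
     le_mx G X).

From HB Require Import structures.
From mathcomp Require Import all_boot all_order all_algebra.
From mathcomp Require Import all_classical all_reals.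
From mathcomp.analysis Require Import sequences exp.
From mathcomp Require Import complex.
From Stdlib Require Import Relations.Relation_Operators.
Import Order.TTheory GRing.Theory Num.Theory.
Set Implicit Arguments. Unset Strict Implicit. Unset Printing Implicit Defensive.
Local Open Scope ring_scope.

(* Put z = e^theta with theta the common value of the two
   roots.  If X solves X = B0 + B1 X + B2 X^2 and X u = z u with z <> 0,
   then u is a fixed vector of z^-1 B0 + B1 + z B2.  Applied to G (with
   eigenvalue z) and to G^r (with eigenvalue z^-1, using the symmetry
   A_*(z) with A_{-1}, A_1 swapped equals A_*(z^-1)), this shows that v and
   v^r are both nonnegative nonzero fixed vectors of A_*(z).  Irreducibility
   of Q makes the positivity graph of A_*(z) strongly connected, and a
   Perron-Frobenius type argument shows that nonnegative eigenvectors of an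
   irreducible nonnegative matrix are positive and unique up to a positive
   factor: for c the minimum of v_i / v^r_i, the vector v - c v^r is a
   nonnegative eigenvector vanishing somewhere, hence zero. *)

Definition irreducible_mx (R : realType) (n : nat) (A : 'M[R]_n) : Prop :=
  forall i j : 'I_n, clos_trans _ (fun k l => 0 < A k l) i j.

Section NonnegativeEigenvectors.
Variables (R : realType) (n : nat) (A : 'M[R]_n) (r : R).
Hypotheses (A_ge0 : nonneg_mx A) (A_irr : irreducible_mx A).

(* A zero entry of a nonnegative eigenvector propagates along positive
   entries of A, since (A d)_i = r d_i = 0 is a sum of nonnegative terms. *)
Lemma eigvec_zero_step (d : 'cV[R]_n) :
  nonneg_mx d -> A *m d = r *: d ->
  forall i j, 0 < A i j -> d i 0 = 0 -> d j 0 = 0.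
Proof.
move=> d_ge0 Ad i j Aij_gt0 di0.
have sum0 : \sum_l A i l * d l 0 = 0.
  by have := congr1 (fun B : 'cV[R]_n => B i 0) Ad; rewrite !mxE di0 mulr0.
have /psumr_eq0P terms0 := sum0.
have /eqP := terms0 (fun l _ => mulr_ge0 (A_ge0 i l) (d_ge0 l 0)) j isT.
by rewrite mulf_eq0 (gt_eqF Aij_gt0) => /eqP.
Qed.

Lemma eigvec_zero_somewhere (d : 'cV[R]_n) (k : 'I_n) :
  nonneg_mx d -> A *m d = r *: d -> d k 0 = 0 -> d = 0.
Proof.
move=> d_ge0 Ad dk0; apply/matrixP => j c; rewrite (ord1 c) mxE.
elim: (A_irr k j) dk0 => [u w Auw | u w x _ IHuw _ IHwx] du0.
  exact: eigvec_zero_step Auw du0.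
exact: IHwx (IHuw du0).
Qed.

Lemma eigvec_pos (d : 'cV[R]_n) :
  nonneg_mx d -> d != 0 -> A *m d = r *: d -> forall i, 0 < d i 0.
Proof.
move=> d_ge0 d_neq0 Ad i; rewrite lt_def d_ge0 andbT; apply/eqP => di0.
by move: d_neq0; rewrite (eigvec_zero_somewhere d_ge0 Ad di0) eqxx.
Qed.

(* With c = min_i u_i / w_i, the eigenvector
   u - c w is nonnegative and vanishes at the minimizing index. *)
Lemma eigvec_proportional (u w : 'cV[R]_n) :
  nonneg_mx u -> u != 0 -> A *m u = r *: u ->
  nonneg_mx w -> w != 0 -> A *m w = r *: w ->
  exists c : R, 0 < c /\ u = c *: w.
Proof.
move=> u_ge0 u_neq0 Au w_ge0 w_neq0 Aw.
have u_gt0 := eigvec_pos u_ge0 u_neq0 Au.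
have w_gt0 := eigvec_pos w_ge0 w_neq0 Aw.
have /existsP[i0 _] : [exists i, u i 0 != 0].
  apply: contraNT u_neq0 => /existsPn u_eq0.
  by apply/eqP/matrixP => i j; rewrite (ord1 j) mxE; apply/eqP/negbNE.
pose ratio i := u i 0 / w i 0.
case: (@arg_minP _ _ _ i0 xpredT ratio isT) => k _ k_min.
exists (ratio k); split; first exact: divr_gt0.
pose d := u - ratio k *: w.
have d_ge0 : nonneg_mx d.
  move=> i j; rewrite (ord1 j) !mxE subr_ge0.
  by have := k_min i isT; rewrite /ratio ler_pdivlMr.
have Ad : A *m d = r *: d.
  by rewrite mulmxBr Au -scalemxAr Aw scalerBr !scalerA mulrC.
have dk0 : d k 0 = 0 by rewrite !mxE /ratio divfK ?subrr // gt_eqF.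
by apply/eqP; rewrite -subr_eq0; apply/eqP; exact: eigvec_zero_somewhere dk0.
Qed.

End NonnegativeEigenvectors.

Section MatrixPencil.
Variables (R : realType) (n : nat).

Lemma Astar_ge0 (B0 B1 B2 : 'M[R]_n) (z : R) :
  nonneg_mx B0 -> nonneg_mx B1 -> nonneg_mx B2 -> 0 < z ->
  nonneg_mx (Astar B0 B1 B2 z).
Proof.
move=> B0_ge0 B1_ge0 B2_ge0 z_gt0 i j; rewrite !mxE.
by rewrite !addr_ge0 // mulr_ge0 // ?invr_ge0 ltW.
Qed.

Lemma Astar_gt0_of_Qentry (Am1 A0 A1 : 'M[R]_n) (z : R) (x y : nat * 'I_n) :
  nonneg_mx Am1 -> nonneg_mx A0 -> nonneg_mx A1 -> 0 < z ->
  0 < Qentry Am1 A0 A1 x y -> 0 < Astar Am1 A0 A1 z x.2 y.2.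
Proof.
move=> Am1_ge0 A0_ge0 A1_ge0 z_gt0.
have down_ge0 : 0 <= z^-1 * Am1 x.2 y.2 by rewrite mulr_ge0 ?invr_ge0 // ltW.
have up_ge0 : 0 <= z * A1 x.2 y.2 by rewrite mulr_ge0 // ltW.
rewrite /Qentry !mxE; case: ifP => _ Q_gt0.
  by rewrite ltr_wpDr // ltr_wpDl.
case: ifP Q_gt0 => _ Q_gt0.
  by rewrite ltr_wpDl ?addr_ge0 ?mulr_gt0.
case: ifP Q_gt0 => _ Q_gt0; last by rewrite ltxx in Q_gt0.
by rewrite ltr_wpDr // ltr_wpDr // mulr_gt0 ?invr_gt0.
Qed.

(* Irreducibility of the level process Q implies irreducibility of the
   phase matrix A_*(z): project paths of Q onto their phases. *)
Lemma Astar_irreducible (Am1 A0 A1 : 'M[R]_n) (z : R) :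
  nonneg_mx Am1 -> nonneg_mx A0 -> nonneg_mx A1 -> 0 < z ->
  irreducible_Q Am1 A0 A1 -> irreducible_mx (Astar Am1 A0 A1 z).
Proof.
move=> Am1_ge0 A0_ge0 A1_ge0 z_gt0 Q_irr i j.
have project x y : clos_trans _ (fun u w => 0 < Qentry Am1 A0 A1 u w) x y ->
    clos_trans _ (fun k l => 0 < Astar Am1 A0 A1 z k l) x.2 y.2.
  elim=> [u w Quw | u w t _ IHuw _ IHwt]; last exact: t_trans IHuw IHwt.
  by apply: t_step; exact: Astar_gt0_of_Qentry Quw.
exact: project (0%N, i) (0%N, j) (Q_irr _ _).
Qed.

Lemma Astar_swap (B0 B1 B2 : 'M[R]_n) (z : R) :
  Astar B0 B1 B2 z = Astar B2 B1 B0 z^-1.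
Proof. by rewrite /Astar invrK -addrA addrC (addrC B1). Qed.

Lemma quadratic_root_eigvec (B0 B1 B2 X : 'M[R]_n) (u : 'cV[R]_n) (z : R) :
  X = B0 + B1 *m X + B2 *m (X *m X) -> X *m u = z *: u -> z != 0 ->
  Astar B0 B1 B2 z *m u = u.
Proof.
move=> X_eq Xu z_neq0.
have XXu : X *m (X *m u) = (z * z) *: u by rewrite Xu -scalemxAr Xu scalerA.
have zu : z *: u = B0 *m u + z *: (B1 *m u) + (z * z) *: (B2 *m u).
  by rewrite -Xu {1}X_eq !mulmxDl -!mulmxA XXu Xu -!scalemxAr.
apply: (@scalerI _ _ z) => //.
rewrite zu /Astar !mulmxDl -!scalemxAl !scalerDr !scalerA mulfV //.
by rewrite scale1r.
Qed.

End MatrixPencil.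

Theorem lemma3p5 (R : realType) (n : nat) (Am1 A0 A1 : 'M[R]_n)
  (thl thu : R) (G Gr : 'M[R]_n) (v vr : 'cV[R]_n) :
  nonneg_mx Am1 -> nonneg_mx A0 -> nonneg_mx A1 ->
  irreducible_Q Am1 A0 A1 ->
  (* inf_theta spr(A_*(e^theta)) <= 1 *)
  (forall eps : R, 0 < eps ->
     exists th : R, spr (Astar Am1 A0 A1 (expR th)) < 1 + eps) ->
  (* thl <= thu are the two real solutions of spr(A_*(e^theta)) = 1 *)
  thl <= thu ->
  spr (Astar Am1 A0 A1 (expR thl)) = 1 ->
  spr (Astar Am1 A0 A1 (expR thu)) = 1 ->
  (forall th : R, spr (Astar Am1 A0 A1 (expR th)) = 1 -> th = thl \/ th = thu) ->
  minimal_nonneg_sol Am1 A0 A1 G ->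
  minimal_nonneg_sol A1 A0 Am1 Gr ->
  nonneg_mx v -> v != 0 -> G *m v = expR thl *: v ->
  nonneg_mx vr -> vr != 0 -> Gr *m vr = expR (- thu) *: vr ->
  thl = thu ->
  exists c : R, 0 < c /\ v = c *: vr.
Proof.
move=> Am1_ge0 A0_ge0 A1_ge0 Q_irr _ _ _ _ _ [_ [G_eq _]] [_ [Gr_eq _]]
  v_ge0 v_neq0 Gv vr_ge0 vr_neq0 Gvr th_eq.
rewrite -th_eq expRN in Gvr.
set z := expR thl in Gv Gvr *.
have z_neq0 : z != 0 := lt0r_neq0 (expR_gt0 thl).
set M := Astar Am1 A0 A1 z.
have Mv : M *m v = 1 *: v.
  by rewrite scale1r; exact: quadratic_root_eigvec G_eq Gv z_neq0.
have Mvr : M *m vr = 1 *: vr.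
  rewrite scale1r /M Astar_swap.
  exact: quadratic_root_eigvec Gr_eq Gvr (invr_neq0 z_neq0).
have M_ge0 : nonneg_mx M := Astar_ge0 Am1_ge0 A0_ge0 A1_ge0 (expR_gt0 thl).
have M_irr : irreducible_mx M :=
  Astar_irreducible Am1_ge0 A0_ge0 A1_ge0 (expR_gt0 thl) Q_irr.
exact: (eigvec_proportional M_ge0 M_irr v_ge0 v_neq0 Mv vr_ge0 vr_neq0 Mvr).
Qed.
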